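(* For one-variable functions $f,g,b$ consider the lattice equation $$(\ast)\qquad u_{,t}=b\bigl(-f(u-u_{-2})+g(u_{-1}-u)-g(u-u_1)\bigr)+b\bigl(-f(u_2-u)-g(u_{-1}-u)+g(u-u_1)\bigr).$$ For the following choices (with $\gamma$ a nonzero constant), equation $(\ast)$ is point equivalent (related by an invertible change of dependent variable $\tilde u(n)=\phi(u(n))$ applied at every site, such as $e^u\mapsto u$ or an affine rescaling, together with a constant rescaling of $t$) to the indicated equation: Case (A): $f(x)=-2\gamma/x$, $g(x)=\gamma/x$, $b(x)=1/x$; equivalent to $$\tfrac12u_{,t}=\frac{1}{\frac{2}{u_2-u}+\frac{1}{u-u_1}+\frac{1}{u-u_{-1}}}-\frac{1}{\frac{2}{u_{-2}-u}+\frac{1}{u-u_1}+\frac{1}{u-u_{-1}}}.$$ Case (C): $f(x)=\log\frac{x-2\gamma}{x+2\gamma}$, $g(x)=\log\frac{x+\gamma}{x-\gamma}$, $b(x)=\frac1{e^x-1}$; equivalent to $$\tfrac14u_{,t}=\frac{1}{\frac{(u_2-u+2)(u_1-u-1)(u_{-1}-u-1)}{(u_2-u-2)(u_1-u+1)(u_{-1}-u+1)}-1}+\frac{1}{\frac{(u_{-2}-u-2)(u_1-u+1)(u_{-1}-u+1)}{(u_{-2}-u+2)(u_1-u-1)(u_{-1}-u-1)}-1}.$$ Case (D): $f(x)=-\log(1+1/x)$, $g(x)=\log x$, $b(x)=\frac1{e^x+1}$; equivalent to $$u_{,t}=\frac{u-u_{-1}}{u_1-u_{-1}+\frac{u-u_1}{u-u_2}}-\frac{u-u_1}{u_1-u_{-1}+\frac{u-u_{-1}}{u-u_{-2}}}.$$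 Case (F): $f(x)=\log(e^{-x}-1)$, $g(x)=\log(e^x-1)$, $b(x)=e^{-x}$; equivalent to $$u_{,t}=u\frac{(1-\frac{u}{u_2})(1-\frac{u_{-1}}{u})}{1-\frac{u}{u_1}}+u\frac{(1-\frac{u_{-2}}{u})(1-\frac{u}{u_1})}{1-\frac{u_{-1}}{u}}.$$ Case (H) at parameter $0$: $f(x)=\log(e^{-x}-1)$, $g(x)=\log(e^x+1)$, $b(x)=e^{-x}$; equivalent to $$u_{,t}=u\frac{(1-\frac{u}{u_2})(1+\frac{u_{-1}}{u})}{1+\frac{u}{u_1}}+u\frac{(1-\frac{u_{-2}}{u})(1+\frac{u}{u_1})}{1+\frac{u_{-1}}{u}}.$$ Case (I): $f(x)=\log\frac{\gamma^{-2}e^x-1}{e^x-\gamma^{-2}}$, $g(x)=\log\frac{\gamma e^x-1}{e^x-\gamma}$, $b(x)=\frac1{e^x-1}$; equivalent to $$-\frac{1}{1+\gamma^2}u_{,t}=\frac{(u-\gamma u_{-1})(u-\gamma u_1)(u-\gamma^{-2}u_2)}{(\gamma u_{-1}-u)(\gamma u_1-u_2)-(\gamma u-u_1)(u_{-1}-\gamma u_2)}-\frac{(u-\gamma^{-1}u_{-1})(u-\gamma^{-1}u_1)(u-\gamma^2u_{-2})}{(\gamma u_{-2}-u_{-1})(\gamma u-u_1)-(\gamma u_{-1}-u)(u_{-2}-\gamma u_1)}.$$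
   Context: Here $u=u(n,t)$, $n\in\mathbb Z$, $u_m=u(n+m,t)$, and $u_{,t}=\partial u/\partial t$. Equation $(\ast)$ is the scalar second-order lattice equation obtained from the sum of two commuting continuous symmetries of a shift-invariant 7-point equation on the triangular lattice. *)

From Stdlib Require Import Reals ZArith.
From Coquelicot Require Import Coquelicot.
Open Scope R_scope.

(** A scalar lattice equation  k * u_{,t} = F(u_{-2},u_{-1},u,u_1,u_2),
    where F is defined on the set D of 5-tuples (u_{-2},u_{-1},u,u_1,u_2). *)
Definition dom5 := R -> R -> R -> R -> R -> Prop.
Definition rhs5 := R -> R -> R -> R -> R -> R.

Definition sat_at (D : dom5) (k : R) (F : rhs5) (u : Z -> R -> R) (n : Z) (t : R)
  : Prop :=
  D (u (n - 2)%Z t) (u (n - 1)%Z t) (u n t) (u (n + 1)%Z t) (u (n + 2)%Z t) /\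
  exists d : R, is_derive (fun s => u n s) t d /\
    k * d = F (u (n - 2)%Z t) (u (n - 1)%Z t) (u n t) (u (n + 1)%Z t) (u (n + 2)%Z t).

Definition point_equiv (D1 : dom5) (k1 : R) (F1 : rhs5)
                       (D2 : dom5) (k2 : R) (F2 : rhs5) : Prop :=
  exists (phi : R -> R) (c : R),
    c <> 0 /\
    (forall x y, phi x = phi y -> x = y) /\
    (forall x, exists d, is_derive phi x d /\ d <> 0) /\
    (forall (u : Z -> R -> R) (n : Z) (t : R),
        sat_at D1 k1 F1 u n t ->
        sat_at D2 k2 F2 (fun m s => phi (u m (c * s))) n (t / c)).

Definition star_rhs (f g b : R -> R) : rhs5 :=
  fun um2 um1 u u1 u2 =>
    b (- f (u - um2) + g (um1 - u) - g (u - u1)) +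
    b (- f (u2 - u) - g (um1 - u) + g (u - u1)).

Definition star_dom (f g : R -> R) (Df Dg Db : R -> Prop) : dom5 :=
  fun um2 um1 u u1 u2 =>
    Df (u - um2) /\ Df (u2 - u) /\ Dg (um1 - u) /\ Dg (u - u1) /\
    Db (- f (u - um2) + g (um1 - u) - g (u - u1)) /\
    Db (- f (u2 - u) - g (um1 - u) + g (u - u1)).

Definition fA (gam : R) (x : R) := - 2 * gam / x.
Definition gA (gam : R) (x : R) := gam / x.
Definition bA (x : R) := 1 / x.
Definition DA (x : R) : Prop := x <> 0.

Definition tgtA_rhs : rhs5 := fun um2 um1 u u1 u2 =>
  1 / (2 / (u2 - u) + 1 / (u - u1) + 1 / (u - um1))
  - 1 / (2 / (um2 - u) + 1 / (u - u1) + 1 / (u - um1)).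
Definition tgtA_dom : dom5 := fun um2 um1 u u1 u2 =>
  u2 - u <> 0 /\ um2 - u <> 0 /\ u - u1 <> 0 /\ u - um1 <> 0 /\
  2 / (u2 - u) + 1 / (u - u1) + 1 / (u - um1) <> 0 /\
  2 / (um2 - u) + 1 / (u - u1) + 1 / (u - um1) <> 0.

Definition fC (gam : R) (x : R) := ln ((x - 2 * gam) / (x + 2 * gam)).
Definition DfC (gam : R) (x : R) : Prop :=
  x + 2 * gam <> 0 /\ 0 < (x - 2 * gam) / (x + 2 * gam).
Definition gC (gam : R) (x : R) := ln ((x + gam) / (x - gam)).
Definition DgC (gam : R) (x : R) : Prop :=
  x - gam <> 0 /\ 0 < (x + gam) / (x - gam).
Definition bC (x : R) := 1 / (exp x - 1).
Definition DbC (x : R) : Prop := exp x - 1 <> 0.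

Definition tgtC_N1 um1 u u1 u2 := (u2 - u + 2) * (u1 - u - 1) * (um1 - u - 1).
Definition tgtC_D1 um1 u u1 u2 := (u2 - u - 2) * (u1 - u + 1) * (um1 - u + 1).
Definition tgtC_N2 um2 um1 u u1 := (um2 - u - 2) * (u1 - u + 1) * (um1 - u + 1).
Definition tgtC_D2 um2 um1 u u1 := (um2 - u + 2) * (u1 - u - 1) * (um1 - u - 1).
Definition tgtC_rhs : rhs5 := fun um2 um1 u u1 u2 =>
  1 / (tgtC_N1 um1 u u1 u2 / tgtC_D1 um1 u u1 u2 - 1)
  + 1 / (tgtC_N2 um2 um1 u u1 / tgtC_D2 um2 um1 u u1 - 1).
Definition tgtC_dom : dom5 := fun um2 um1 u u1 u2 =>
  tgtC_D1 um1 u u1 u2 <> 0 /\ tgtC_D2 um2 um1 u u1 <> 0 /\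
  tgtC_N1 um1 u u1 u2 / tgtC_D1 um1 u u1 u2 - 1 <> 0 /\
  tgtC_N2 um2 um1 u u1 / tgtC_D2 um2 um1 u u1 - 1 <> 0.

Definition fD (x : R) := - ln (1 + 1 / x).
Definition DfD (x : R) : Prop := x <> 0 /\ 0 < 1 + 1 / x.
Definition gD (x : R) := ln x.
Definition DgD (x : R) : Prop := 0 < x.
Definition bD (x : R) := 1 / (exp x + 1).
Definition DbD (x : R) : Prop := True.

Definition tgtD_rhs : rhs5 := fun um2 um1 u u1 u2 =>
  (u - um1) / (u1 - um1 + (u - u1) / (u - u2))
  - (u - u1) / (u1 - um1 + (u - um1) / (u - um2)).
Definition tgtD_dom : dom5 := fun um2 um1 u u1 u2 =>
  u - u2 <> 0 /\ u - um2 <> 0 /\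
  u1 - um1 + (u - u1) / (u - u2) <> 0 /\
  u1 - um1 + (u - um1) / (u - um2) <> 0.

Definition fF (x : R) := ln (exp (- x) - 1).
Definition DfF (x : R) : Prop := 0 < exp (- x) - 1.
Definition gF (x : R) := ln (exp x - 1).
Definition DgF (x : R) : Prop := 0 < exp x - 1.
Definition bF (x : R) := exp (- x).
Definition DbF (x : R) : Prop := True.

Definition tgtF_rhs : rhs5 := fun um2 um1 u u1 u2 =>
  u * ((1 - u / u2) * (1 - um1 / u)) / (1 - u / u1)
  + u * ((1 - um2 / u) * (1 - u / u1)) / (1 - um1 / u).
Definition tgtF_dom : dom5 := fun um2 um1 u u1 u2 =>
  u2 <> 0 /\ u <> 0 /\ u1 <> 0 /\ 1 - u / u1 <> 0 /\ 1 - um1 / u <> 0.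

Definition fH (x : R) := ln (exp (- x) - 1).
Definition DfH (x : R) : Prop := 0 < exp (- x) - 1.
Definition gH (x : R) := ln (exp x + 1).
Definition DgH (x : R) : Prop := 0 < exp x + 1.
Definition bH (x : R) := exp (- x).
Definition DbH (x : R) : Prop := True.

Definition tgtH_rhs : rhs5 := fun um2 um1 u u1 u2 =>
  u * ((1 - u / u2) * (1 + um1 / u)) / (1 + u / u1)
  + u * ((1 - um2 / u) * (1 + u / u1)) / (1 + um1 / u).
Definition tgtH_dom : dom5 := fun um2 um1 u u1 u2 =>
  u2 <> 0 /\ u <> 0 /\ u1 <> 0 /\ 1 + u / u1 <> 0 /\ 1 + um1 / u <> 0.

Definition fI (gam : R) (x : R) :=
  ln ((/ gam ^ 2 * exp x - 1) / (exp x - / gam ^ 2)).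
Definition DfI (gam : R) (x : R) : Prop :=
  exp x - / gam ^ 2 <> 0 /\ 0 < (/ gam ^ 2 * exp x - 1) / (exp x - / gam ^ 2).
Definition gI (gam : R) (x : R) := ln ((gam * exp x - 1) / (exp x - gam)).
Definition DgI (gam : R) (x : R) : Prop :=
  exp x - gam <> 0 /\ 0 < (gam * exp x - 1) / (exp x - gam).
Definition bI (x : R) := 1 / (exp x - 1).
Definition DbI (x : R) : Prop := exp x - 1 <> 0.

Definition tgtI_den1 (gam : R) um1 u u1 u2 :=
  (gam * um1 - u) * (gam * u1 - u2) - (gam * u - u1) * (um1 - gam * u2).
Definition tgtI_den2 (gam : R) um2 um1 u u1 :=
  (gam * um2 - um1) * (gam * u - u1) - (gam * um1 - u) * (um2 - gam * u1).
Definition tgtI_rhs (gam : R) : rhs5 := fun um2 um1 u u1 u2 =>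
  (u - gam * um1) * (u - gam * u1) * (u - / gam ^ 2 * u2) / tgtI_den1 gam um1 u u1 u2
  - (u - / gam * um1) * (u - / gam * u1) * (u - gam ^ 2 * um2) / tgtI_den2 gam um2 um1 u u1.
Definition tgtI_dom (gam : R) : dom5 := fun um2 um1 u u1 u2 =>
  tgtI_den1 gam um1 u u1 u2 <> 0 /\ tgtI_den2 gam um2 um1 u u1 <> 0.

From Stdlib Require Import Reals Lra.
From Coquelicot Require Import Coquelicot.
Open Scope R_scope.

(* Each case is realised by one of two point transformations: the rescaling
   u |-> u / gam (cases A and C, and the identity in case D), under which f
   and g become their values at gam = 1, or u |-> e^u (cases F, H and I).
   After the change of variables, the exponential of each of the two
   arguments of b in (star) is a product of ratios of differences (or
   quotients) of neighbouring new variables, and b is a rational function of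
   that exponential (of the argument itself in case A).  Both equations then
   have the same right-hand side up to the constant factor absorbed by the
   rescaling of time, which is an identity of rational functions, and the
   domain of (star) is carried into the domain of the target equation. *)

Ltac neq0_from_hyp :=
  match goal with |- ?e <> 0 =>
    let E := fresh in intro E;
    match goal with H : _ <> 0 |- _ => apply H; clear - E; lra end
  end.
Ltac neq0 :=
  repeat split;
  repeat (apply Rmult_integral_contrapositive_currified || apply Rinv_neq_0_compat);
  try neq0_from_hyp.

Lemma Rdiv_pos_neq0 p q : 0 < p / q -> p <> 0 /\ q <> 0.
Proof. intros H; destruct (Rdiv_pos_cases p q H); split; lra. Qed.

Lemma Rmult_neq0_iff_r k p : k <> 0 -> (k * p <> 0 <-> p <> 0).
Proof.
  intros Hk; split.
  - now intros H%Rmult_neq_0_reg.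
  - now apply Rmult_integral_contrapositive_currified.
Qed.

Lemma exp_opp_add_sub p q r : exp (- p + q - r) = exp q / (exp p * exp r).
Proof. unfold Rminus, Rdiv; rewrite !exp_plus, !exp_Ropp, Rinv_mult; ring. Qed.

Lemma exp_opp_sub_add p q r : exp (- p - q + r) = exp r / (exp p * exp q).
Proof. unfold Rminus, Rdiv; rewrite !exp_plus, !exp_Ropp, Rinv_mult; ring. Qed.

Lemma exp_ln_sub P Q : 0 < P -> 0 < Q -> exp (ln P - ln Q) = P / Q.
Proof. intros HP HQ; unfold Rminus, Rdiv; rewrite exp_plus, exp_Ropp, !exp_ln; auto. Qed.

Lemma exp_opp_ln_sub P Q : 0 < P -> 0 < Q -> exp (- (ln P - ln Q)) = Q / P.
Proof. intros HP HQ; rewrite Ropp_minus_distr; now apply exp_ln_sub. Qed.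

Lemma sub_neq0_of_ratio_gt1 P Q : 0 < Q -> 0 < P / Q - 1 -> P - Q <> 0.
Proof.
  intros HQ H; replace (P / Q - 1) with ((P - Q) / Q) in H by (field; lra).
  now destruct (Rdiv_pos_neq0 _ _ H).
Qed.

Lemma point_equiv_intro (D1 D2 : dom5) (F1 F2 : rhs5) (k2 c : R) (phi dphi : R -> R) :
  c <> 0 ->
  (forall x y, phi x = phi y -> x = y) ->
  (forall x, is_derive phi x (dphi x)) ->
  (forall x, dphi x <> 0) ->
  (forall um2 um1 u u1 u2, D1 um2 um1 u u1 u2 ->
     D2 (phi um2) (phi um1) (phi u) (phi u1) (phi u2) /\
     F2 (phi um2) (phi um1) (phi u) (phi u1) (phi u2) = k2 * c * dphi u * F1 um2 um1 u u1 u2) ->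
  point_equiv D1 1 F1 D2 k2 F2.
Proof.
  intros Hc Hinj Hphi Hdphi Htransf.
  exists phi, c; split; [exact Hc |]; split; [exact Hinj |]; split.
  { intros x; exists (dphi x); auto. }
  intros u n t [HD [d [Hd Heq]]].
  assert (Ht : c * (t / c) = t) by (field; exact Hc).
  destruct (Htransf _ _ _ _ _ HD) as [HD2 HF].
  unfold sat_at; cbv beta; rewrite Ht.
  split; [exact HD2 |].
  exists (c * d * dphi (u n t)); split.
  - apply (is_derive_comp phi (fun s => u n (c * s))); rewrite ?Ht; [apply Hphi |].
    apply (is_derive_comp (u n) (fun s => c * s)); rewrite ?Ht; [exact Hd |].
    auto_derive; [exact I | ring].
  - rewrite HF, <- Heq; ring.
Qed.

Corollary point_equiv_scale (D1 D2 : dom5) (F1 F2 : rhs5) (k2 s c : R) :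
  s <> 0 -> c <> 0 ->
  (forall A B X Y Z, D1 (s * A) (s * B) (s * X) (s * Y) (s * Z) ->
     D2 A B X Y Z /\
     F2 A B X Y Z = k2 * (c / s) * F1 (s * A) (s * B) (s * X) (s * Y) (s * Z)) ->
  point_equiv D1 1 F1 D2 k2 F2.
Proof.
  intros Hs Hc Htransf.
  apply (point_equiv_intro D1 D2 F1 F2 k2 c (fun x => x / s) (fun _ => / s)); auto.
  - intros x y E; apply (Rmult_eq_reg_r (/ s)); [exact E | now apply Rinv_neq_0_compat].
  - intros x; auto_derive; [exact I | ring].
  - intros _; now apply Rinv_neq_0_compat.
  - intros um2 um1 u u1 u2 HD.
    assert (Hsx : forall x, s * (x / s) = x) by (intros; field; exact Hs).
    specialize (Htransf (um2 / s) (um1 / s) (u / s) (u1 / s) (u2 / s)).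
    rewrite !Hsx in Htransf.
    destruct (Htransf HD) as [HD2 HF]; split; [exact HD2 |].
    rewrite HF; unfold Rdiv; ring.
Qed.

Corollary point_equiv_exp (D1 D2 : dom5) (F1 F2 : rhs5) (k2 c : R) :
  c <> 0 ->
  (forall A B X Y Z, 0 < A -> 0 < B -> 0 < X -> 0 < Y -> 0 < Z ->
     D1 (ln A) (ln B) (ln X) (ln Y) (ln Z) ->
     D2 A B X Y Z /\ F2 A B X Y Z = k2 * c * X * F1 (ln A) (ln B) (ln X) (ln Y) (ln Z)) ->
  point_equiv D1 1 F1 D2 k2 F2.
Proof.
  intros Hc Htransf.
  apply (point_equiv_intro D1 D2 F1 F2 k2 c exp exp); auto.
  - exact exp_inv.
  - exact is_derive_exp.
  - intros x; apply Rgt_not_eq, exp_pos.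
  - intros um2 um1 u u1 u2 HD.
    specialize (Htransf (exp um2) (exp um1) (exp u) (exp u1) (exp u2)).
    rewrite !ln_exp in Htransf.
    apply Htransf; auto using exp_pos.
Qed.

Lemma star_rhs_scale (f g f' g' b : R -> R) (s : R) :
  (forall p, f (s * p) = f' p) -> (forall p, g (s * p) = g' p) ->
  forall A B X Y Z,
  star_rhs f g b (s * A) (s * B) (s * X) (s * Y) (s * Z) = star_rhs f' g' b A B X Y Z.
Proof.
  intros Hf Hg A B X Y Z; unfold star_rhs.
  now rewrite <- !Rmult_minus_distr_l, !Hf, !Hg.
Qed.

Lemma star_dom_scale (f g f' g' : R -> R) (Df Dg Df' Dg' Db : R -> Prop) (s : R) :
  (forall p, f (s * p) = f' p) -> (forall p, g (s * p) = g' p) ->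
  (forall p, Df (s * p) <-> Df' p) -> (forall p, Dg (s * p) <-> Dg' p) ->
  forall A B X Y Z,
  star_dom f g Df Dg Db (s * A) (s * B) (s * X) (s * Y) (s * Z) <->
  star_dom f' g' Df' Dg' Db A B X Y Z.
Proof.
  intros Hf Hg HDf HDg A B X Y Z; unfold star_dom.
  now rewrite <- !Rmult_minus_distr_l, !Hf, !Hg, !HDf, !HDg.
Qed.

Lemma DA_scale gam p : gam <> 0 -> (DA (gam * p) <-> DA p).
Proof. apply Rmult_neq0_iff_r. Qed.

(* No hypothesis [p <> 0] is needed: at [p = 0] both sides are [0], as [/ 0 = 0]. *)
Lemma fA_scale gam p : gam <> 0 -> fA gam (gam * p) = fA 1 p.
Proof.
  intros Hg; unfold fA; replace (- 2 * gam) with (gam * (- 2 * 1)) by ring.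
  now apply Rdiv_mult_l_l.
Qed.

Lemma gA_scale gam p : gam <> 0 -> gA gam (gam * p) = gA 1 p.
Proof. intros Hg; unfold gA; rewrite <- (Rmult_1_r gam) at 1; now apply Rdiv_mult_l_l. Qed.

Lemma caseA1_pointwise um2 um1 u u1 u2 :
  star_dom (fA 1) (gA 1) DA DA DA um2 um1 u u1 u2 ->
  tgtA_dom um2 um1 u u1 u2 /\
  tgtA_rhs um2 um1 u u1 u2 = star_rhs (fA 1) (gA 1) bA um2 um1 u u1 u2.
Proof.
  unfold star_dom, DA; intros (H1 & H2 & H3 & H4 & H5 & H6).
  set (S1 := 2 / (um2 - u) + 1 / (u - u1) + 1 / (u - um1)).
  set (S2 := 2 / (u2 - u) + 1 / (u - u1) + 1 / (u - um1)).
  assert (E1 : - fA 1 (u - um2) + gA 1 (um1 - u) - gA 1 (u - u1) = - S1)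
    by (unfold S1, fA, gA; field; neq0).
  assert (E2 : - fA 1 (u2 - u) - gA 1 (um1 - u) + gA 1 (u - u1) = S2)
    by (unfold S2, fA, gA; field; neq0).
  rewrite E1 in H5; rewrite E2 in H6.
  unfold tgtA_dom, tgtA_rhs, star_rhs, bA; fold S1 S2; rewrite E1, E2.
  split; [neq0 | field; neq0].
Qed.

Lemma caseA gam : gam <> 0 ->
  point_equiv (star_dom (fA gam) (gA gam) DA DA DA) 1 (star_rhs (fA gam) (gA gam) bA)
              tgtA_dom (1 / 2) tgtA_rhs.
Proof.
  intros Hg.
  apply (point_equiv_scale _ _ _ _ _ gam (2 * gam)); [exact Hg | neq0 |].
  intros A B X Y Z HD.
  assert (Hf := fun p => fA_scale gam p Hg); assert (Hgs := fun p => gA_scale gam p Hg).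
  assert (HDs := fun p => DA_scale gam p Hg).
  rewrite (star_dom_scale _ _ _ _ _ _ _ _ _ _ Hf Hgs HDs HDs) in HD.
  rewrite (star_rhs_scale _ _ _ _ _ _ Hf Hgs).
  destruct (caseA1_pointwise _ _ _ _ _ HD) as [HD2 HF].
  split; [exact HD2 | rewrite HF; field; exact Hg].
Qed.

Lemma fC_scale gam p : gam <> 0 -> fC gam (gam * p) = fC 1 p.
Proof.
  intros Hg; unfold fC.
  replace (gam * p - 2 * gam) with (gam * (p - 2 * 1)) by ring.
  replace (gam * p + 2 * gam) with (gam * (p + 2 * 1)) by ring.
  now rewrite Rdiv_mult_l_l.
Qed.

Lemma DfC_scale gam p : gam <> 0 -> (DfC gam (gam * p) <-> DfC 1 p).
Proof.
  intros Hg; unfold DfC.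
  replace (gam * p - 2 * gam) with (gam * (p - 2 * 1)) by ring.
  replace (gam * p + 2 * gam) with (gam * (p + 2 * 1)) by ring.
  now rewrite Rdiv_mult_l_l, Rmult_neq0_iff_r.
Qed.

Lemma gC_scale gam p : gam <> 0 -> gC gam (gam * p) = gC 1 p.
Proof.
  intros Hg; unfold gC.
  replace (gam * p + gam) with (gam * (p + 1)) by ring.
  replace (gam * p - gam) with (gam * (p - 1)) by ring.
  now rewrite Rdiv_mult_l_l.
Qed.

Lemma DgC_scale gam p : gam <> 0 -> (DgC gam (gam * p) <-> DgC 1 p).
Proof.
  intros Hg; unfold DgC.
  replace (gam * p + gam) with (gam * (p + 1)) by ring.
  replace (gam * p - gam) with (gam * (p - 1)) by ring.
  now rewrite Rdiv_mult_l_l, Rmult_neq0_iff_r.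
Qed.

Lemma DfC1_factors p : DfC 1 p -> p - 2 <> 0 /\ p + 2 <> 0.
Proof. intros [_ H]; rewrite Rmult_1_r in H; exact (Rdiv_pos_neq0 _ _ H). Qed.

Lemma DgC1_factors p : DgC 1 p -> p + 1 <> 0 /\ p - 1 <> 0.
Proof. intros [_ H]; exact (Rdiv_pos_neq0 _ _ H). Qed.

Lemma exp_fC1 p : DfC 1 p -> exp (fC 1 p) = (p - 2) / (p + 2).
Proof. intros [_ H]; unfold fC; rewrite exp_ln by exact H; now rewrite Rmult_1_r. Qed.

Lemma exp_gC1 p : DgC 1 p -> exp (gC 1 p) = (p + 1) / (p - 1).
Proof. intros [_ H]; unfold gC; now rewrite exp_ln. Qed.

Lemma caseC1_pointwise um2 um1 u u1 u2 :
  star_dom (fC 1) (gC 1) (DfC 1) (DgC 1) DbC um2 um1 u u1 u2 ->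
  tgtC_dom um2 um1 u u1 u2 /\
  tgtC_rhs um2 um1 u u1 u2 = star_rhs (fC 1) (gC 1) bC um2 um1 u u1 u2.
Proof.
  unfold star_dom, DbC; intros (Hfl & Hfr & Hgl & Hgr & Hbl & Hbr).
  destruct (DfC1_factors _ Hfl), (DfC1_factors _ Hfr), (DgC1_factors _ Hgl), (DgC1_factors _ Hgr).
  assert (El : exp (- fC 1 (u - um2) + gC 1 (um1 - u) - gC 1 (u - u1)) =
               tgtC_N2 um2 um1 u u1 / tgtC_D2 um2 um1 u u1).
  { rewrite exp_opp_add_sub, exp_fC1, !exp_gC1 by assumption.
    unfold tgtC_N2, tgtC_D2; field; neq0. }
  assert (Er : exp (- fC 1 (u2 - u) - gC 1 (um1 - u) + gC 1 (u - u1)) =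
               tgtC_N1 um1 u u1 u2 / tgtC_D1 um1 u u1 u2).
  { rewrite exp_opp_sub_add, exp_fC1, !exp_gC1 by assumption.
    unfold tgtC_N1, tgtC_D1; field; neq0. }
  rewrite El in Hbl; rewrite Er in Hbr.
  unfold tgtC_dom, tgtC_rhs, star_rhs, bC; rewrite El, Er.
  split; [repeat split; try assumption; unfold tgtC_D1, tgtC_D2; neq0 | apply Rplus_comm].
Qed.

Lemma caseC gam : gam <> 0 ->
  point_equiv (star_dom (fC gam) (gC gam) (DfC gam) (DgC gam) DbC) 1
              (star_rhs (fC gam) (gC gam) bC)
              tgtC_dom (1 / 4) tgtC_rhs.
Proof.
  intros Hg.
  apply (point_equiv_scale _ _ _ _ _ gam (4 * gam)); [exact Hg | neq0 |].
  intros A B X Y Z HD.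
  assert (Hf := fun p => fC_scale gam p Hg); assert (Hgs := fun p => gC_scale gam p Hg).
  assert (HDf := fun p => DfC_scale gam p Hg); assert (HDg := fun p => DgC_scale gam p Hg).
  rewrite (star_dom_scale _ _ _ _ _ _ _ _ _ _ Hf Hgs HDf HDg) in HD.
  rewrite (star_rhs_scale _ _ _ _ _ _ Hf Hgs).
  destruct (caseC1_pointwise _ _ _ _ _ HD) as [HD2 HF].
  split; [exact HD2 | rewrite HF; field; exact Hg].
Qed.

Lemma DfD_factors p : DfD p -> p <> 0 /\ p + 1 <> 0.
Proof.
  intros [Hp H]; replace (1 + 1 / p) with ((p + 1) / p) in H by (field; exact Hp).
  destruct (Rdiv_pos_neq0 _ _ H); split; assumption.
Qed.

Lemma exp_fD p : DfD p -> exp (fD p) = p / (p + 1).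
Proof.
  intros HD; destruct (DfD_factors p HD) as [Hp Hp1]; destruct HD as [_ H].
  unfold fD; rewrite exp_Ropp, exp_ln by exact H; field; split; assumption.
Qed.

Lemma caseD_pointwise um2 um1 u u1 u2 :
  star_dom fD gD DfD DgD DbD um2 um1 u u1 u2 ->
  tgtD_dom um2 um1 u u1 u2 /\
  tgtD_rhs um2 um1 u u1 u2 = star_rhs fD gD bD um2 um1 u u1 u2.
Proof.
  unfold star_dom, DgD; intros (Hfl & Hfr & Hgl & Hgr & _ & _).
  destruct (DfD_factors _ Hfl), (DfD_factors _ Hfr).
  assert (um1 - u <> 0) by lra; assert (u - u1 <> 0) by lra.
  set (el := exp (- fD (u - um2) + gD (um1 - u) - gD (u - u1))).
  set (er := exp (- fD (u2 - u) - gD (um1 - u) + gD (u - u1))).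
  assert (Tl : u1 - um1 + (u - um1) / (u - um2) = - (u - u1) * (1 + el)).
  { unfold el; rewrite exp_opp_add_sub, exp_fD by assumption; unfold gD.
    rewrite !exp_ln by assumption; field; neq0. }
  assert (Tr : u1 - um1 + (u - u1) / (u - u2) = - (um1 - u) * (1 + er)).
  { unfold er; rewrite exp_opp_sub_add, exp_fD by assumption; unfold gD.
    rewrite !exp_ln by assumption; field; neq0. }
  assert (0 < el) by (unfold el; apply exp_pos); assert (0 < er) by (unfold er; apply exp_pos).
  assert (1 + el <> 0) by lra; assert (1 + er <> 0) by lra.
  unfold tgtD_dom, tgtD_rhs, star_rhs, bD; fold el er; rewrite Tl, Tr.
  split; [neq0 | field; neq0].
Qed.

Lemma caseD :
  point_equiv (star_dom fD gD DfD DgD DbD) 1 (star_rhs fD gD bD) tgtD_dom 1 tgtD_rhs.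
Proof.
  apply (point_equiv_scale _ _ _ _ _ 1 1); [lra | lra |].
  intros A B X Y Z; rewrite !Rmult_1_l; intros HD.
  destruct (caseD_pointwise _ _ _ _ _ HD) as [HD2 HF].
  split; [exact HD2 | rewrite HF; field].
Qed.

Lemma caseF_pointwise A B X Y Z :
  0 < A -> 0 < B -> 0 < X -> 0 < Y -> 0 < Z ->
  star_dom fF gF DfF DgF DbF (ln A) (ln B) (ln X) (ln Y) (ln Z) ->
  tgtF_dom A B X Y Z /\
  tgtF_rhs A B X Y Z = - X * star_rhs fF gF bF (ln A) (ln B) (ln X) (ln Y) (ln Z).
Proof.
  intros HA HB HX HY HZ; unfold star_dom, DfF, DgF; intros (Hfl & Hfr & Hgl & Hgr & _ & _).
  unfold tgtF_dom, tgtF_rhs, star_rhs, bF.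
  rewrite !exp_Ropp, exp_opp_add_sub, exp_opp_sub_add; unfold fF, gF.
  rewrite !exp_ln by assumption.
  rewrite !exp_opp_ln_sub, !exp_ln_sub in * by assumption.
  assert (Hl := sub_neq0_of_ratio_gt1 _ _ HX Hfl); assert (Hr := sub_neq0_of_ratio_gt1 _ _ HZ Hfr).
  assert (Hm := sub_neq0_of_ratio_gt1 _ _ HX Hgl); assert (Hp := sub_neq0_of_ratio_gt1 _ _ HY Hgr).
  assert (X <> 0) by lra; assert (Y <> 0) by lra; assert (Z <> 0) by lra.
  split; [repeat split; assumption || lra | field; neq0].
Qed.

Lemma caseH_pointwise A B X Y Z :
  0 < A -> 0 < B -> 0 < X -> 0 < Y -> 0 < Z ->
  star_dom fH gH DfH DgH DbH (ln A) (ln B) (ln X) (ln Y) (ln Z) ->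
  tgtH_dom A B X Y Z /\
  tgtH_rhs A B X Y Z = - X * star_rhs fH gH bH (ln A) (ln B) (ln X) (ln Y) (ln Z).
Proof.
  intros HA HB HX HY HZ; unfold star_dom, DfH, DgH; intros (Hfl & Hfr & Hgl & Hgr & _ & _).
  unfold tgtH_dom, tgtH_rhs, star_rhs, bH.
  rewrite !exp_Ropp, exp_opp_add_sub, exp_opp_sub_add; unfold fH, gH.
  rewrite !exp_ln by assumption.
  rewrite !exp_opp_ln_sub, !exp_ln_sub in * by assumption.
  assert (Hl := sub_neq0_of_ratio_gt1 _ _ HX Hfl); assert (Hr := sub_neq0_of_ratio_gt1 _ _ HZ Hfr).
  assert (0 < B / X) by (apply Rdiv_lt_0_compat; assumption).
  assert (0 < X / Y) by (apply Rdiv_lt_0_compat; assumption).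
  assert (X <> 0) by lra; assert (Y <> 0) by lra; assert (Z <> 0) by lra.
  assert (B + X <> 0) by lra; assert (X + Y <> 0) by lra.
  split; [repeat split; assumption || lra | field; neq0].
Qed.

Lemma caseF :
  point_equiv (star_dom fF gF DfF DgF DbF) 1 (star_rhs fF gF bF) tgtF_dom 1 tgtF_rhs.
Proof.
  apply (point_equiv_exp _ _ _ _ _ (-1)); [lra |].
  intros A B X Y Z HA HB HX HY HZ HD.
  destruct (caseF_pointwise _ _ _ _ _ HA HB HX HY HZ HD) as [HD2 HF].
  split; [exact HD2 | rewrite HF; ring].
Qed.

Lemma caseH :
  point_equiv (star_dom fH gH DfH DgH DbH) 1 (star_rhs fH gH bH) tgtH_dom 1 tgtH_rhs.
Proof.
  apply (point_equiv_exp _ _ _ _ _ (-1)); [lra |].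
  intros A B X Y Z HA HB HX HY HZ HD.
  destruct (caseH_pointwise _ _ _ _ _ HA HB HX HY HZ HD) as [HD2 HF].
  split; [exact HD2 | rewrite HF; ring].
Qed.

Lemma DgI_ratio_factors a P Q : 0 < P -> 0 < Q ->
  DgI a (ln P - ln Q) -> a * P - Q <> 0 /\ P - a * Q <> 0.
Proof.
  intros HP HQ [_ H]; rewrite exp_ln_sub in H by assumption.
  destruct (Rdiv_pos_neq0 _ _ H) as [Hnum Hden]; split; intros E.
  - apply Hnum; replace (a * (P / Q) - 1) with ((a * P - Q) / Q) by (field; lra).
    rewrite E; unfold Rdiv; ring.
  - apply Hden; replace (P / Q - a) with ((P - a * Q) / Q) by (field; lra).
    rewrite E; unfold Rdiv; ring.
Qed.

Lemma exp_gI_ratio a P Q : 0 < P -> 0 < Q ->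
  DgI a (ln P - ln Q) -> exp (gI a (ln P - ln Q)) = (a * P - Q) / (P - a * Q).
Proof.
  intros HP HQ HD; destruct (DgI_ratio_factors a P Q HP HQ HD) as [_ Hden].
  destruct HD as [_ H]; unfold gI; rewrite exp_ln by exact H.
  rewrite exp_ln_sub by assumption; field; split; lra.
Qed.

(* [fI gam] and [DfI gam] are [gI] and [DgI] at the parameter [/ gam ^ 2]. *)
Lemma DfI_ratio_factors gam P Q : gam <> 0 -> 0 < P -> 0 < Q ->
  DfI gam (ln P - ln Q) -> P - gam ^ 2 * Q <> 0 /\ gam ^ 2 * P - Q <> 0.
Proof.
  intros Hg HP HQ HD; assert (Hg2 : gam ^ 2 <> 0) by now apply pow_nonzero.
  destruct (DgI_ratio_factors (/ gam ^ 2) P Q HP HQ HD) as [Hnum Hden]; split; intros E.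
  - apply Hnum; replace (/ gam ^ 2 * P - Q) with ((P - gam ^ 2 * Q) / gam ^ 2) by (field; exact Hg).
    rewrite E; unfold Rdiv; ring.
  - apply Hden; replace (P - / gam ^ 2 * Q) with ((gam ^ 2 * P - Q) / gam ^ 2) by (field; exact Hg).
    rewrite E; unfold Rdiv; ring.
Qed.

Lemma exp_fI_ratio gam P Q : gam <> 0 -> 0 < P -> 0 < Q ->
  DfI gam (ln P - ln Q) -> exp (fI gam (ln P - ln Q)) = (P - gam ^ 2 * Q) / (gam ^ 2 * P - Q).
Proof.
  intros Hg HP HQ HD; destruct (DfI_ratio_factors gam P Q Hg HP HQ HD).
  change (fI gam) with (gI (/ gam ^ 2)); rewrite exp_gI_ratio by assumption.
  field; repeat split; assumption || now apply pow_nonzero.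
Qed.

Lemma caseI_pointwise gam A B X Y Z : gam <> 0 -> gam ^ 2 <> 1 ->
  0 < A -> 0 < B -> 0 < X -> 0 < Y -> 0 < Z ->
  star_dom (fI gam) (gI gam) (DfI gam) (DgI gam) DbI (ln A) (ln B) (ln X) (ln Y) (ln Z) ->
  tgtI_dom gam A B X Y Z /\
  tgtI_rhs gam A B X Y Z =
    (1 - gam ^ 2) / gam ^ 2 * X * star_rhs (fI gam) (gI gam) bI (ln A) (ln B) (ln X) (ln Y) (ln Z).
Proof.
  intros Hg Hg1 HA HB HX HY HZ.
  unfold star_dom, DbI; intros (Hfl & Hfr & Hgl & Hgr & Hbl & Hbr).
  destruct (DfI_ratio_factors _ _ _ Hg HX HA Hfl), (DfI_ratio_factors _ _ _ Hg HZ HX Hfr),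
    (DgI_ratio_factors _ _ _ HB HX Hgl), (DgI_ratio_factors _ _ _ HX HY Hgr).
  assert (X <> 0) by lra; assert (1 - gam ^ 2 <> 0) by lra.
  set (el := exp (- fI gam (ln X - ln A) + gI gam (ln B - ln X) - gI gam (ln X - ln Y))) in *.
  set (er := exp (- fI gam (ln Z - ln X) - gI gam (ln B - ln X) + gI gam (ln X - ln Y))) in *.
  assert (Dl : tgtI_den2 gam A B X Y =
    (X - gam ^ 2 * A) * (B - gam * X) * (gam * X - Y) * (el - 1) / ((1 - gam ^ 2) * X)).
  { unfold el; rewrite exp_opp_add_sub, exp_fI_ratio, !exp_gI_ratio by assumption.
    unfold tgtI_den2; field; neq0. }
  assert (Dr : tgtI_den1 gam B X Y Z =
    (Z - gam ^ 2 * X) * (gam * B - X) * (X - gam * Y) * (er - 1) / ((1 - gam ^ 2) * X)).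
  { unfold er; rewrite exp_opp_sub_add, exp_fI_ratio, !exp_gI_ratio by assumption.
    unfold tgtI_den1; field; neq0. }
  unfold tgtI_dom, tgtI_rhs, star_rhs, bI; fold el er; rewrite Dl, Dr.
  split; [unfold Rdiv; split | field]; neq0.
Qed.

Lemma gI1_eq0 p : DgI 1 p -> gI 1 p = 0.
Proof. intros [H _]; unfold gI; rewrite Rmult_1_l, Rdiv_diag by exact H; exact ln_1. Qed.

Lemma DgI_opp1_false p : ~ DgI (-1) p.
Proof.
  intros [_ H]; pose proof (exp_pos p).
  replace ((-1 * exp p - 1) / (exp p - -1)) with (-1) in H by (field; lra); lra.
Qed.

(* At gam = 1 both f and g vanish, so b is evaluated at its pole 0; at gam = -1
   the argument of the logarithm in g is -1. *)
Lemma star_dom_I_empty gam um2 um1 u u1 u2 : gam ^ 2 = 1 ->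
  ~ star_dom (fI gam) (gI gam) (DfI gam) (DgI gam) DbI um2 um1 u u1 u2.
Proof.
  intros Hg1 (Hfl & _ & Hgl & Hgr & Hbl & _).
  destruct (Rmult_integral (gam - 1) (gam + 1)) as [E | E];
    [replace ((gam - 1) * (gam + 1)) with (gam ^ 2 - 1) by ring; lra | |].
  - replace gam with 1 in * by lra.
    change (DfI 1) with (DgI (/ 1 ^ 2)) in Hfl; change (fI 1) with (gI (/ 1 ^ 2)) in Hbl.
    replace (/ 1 ^ 2) with 1 in * by field.
    apply Hbl; rewrite !gI1_eq0 by assumption.
    replace (- 0 + 0 - 0) with 0 by ring; rewrite exp_0; ring.
  - replace gam with (-1) in Hgl by lra; exact (DgI_opp1_false _ Hgl).
Qed.

Lemma caseI gam : gam <> 0 ->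
  point_equiv (star_dom (fI gam) (gI gam) (DfI gam) (DgI gam) DbI) 1
              (star_rhs (fI gam) (gI gam) bI)
              (tgtI_dom gam) (- (1 / (1 + gam ^ 2))) (tgtI_rhs gam).
Proof.
  intros Hg; assert (gam ^ 2 <> 0) by now apply pow_nonzero.
  assert (1 + gam ^ 2 <> 0) by (pose proof (pow2_ge_0 gam); lra).
  destruct (Req_dec (gam ^ 2) 1) as [Hg1 | Hg1].
  - apply (point_equiv_exp _ _ _ _ _ 1); [lra |].
    intros A B X Y Z _ _ _ _ _ HD; destruct (star_dom_I_empty _ _ _ _ _ _ Hg1 HD).
  - apply (point_equiv_exp _ _ _ _ _ ((gam ^ 4 - 1) / gam ^ 2)).
    + replace (gam ^ 4 - 1) with ((gam ^ 2 - 1) * (1 + gam ^ 2)) by ring.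
      assert (gam ^ 2 - 1 <> 0) by lra; unfold Rdiv; neq0.
    + intros A B X Y Z HA HB HX HY HZ HD.
      destruct (caseI_pointwise _ _ _ _ _ _ Hg Hg1 HA HB HX HY HZ HD) as [HD2 HF].
      split; [exact HD2 | rewrite HF; field; split; assumption].
Qed.

Theorem mainTheorem4 :
  forall gam : R, gam <> 0 ->
  (* Case (A) *)
  point_equiv (star_dom (fA gam) (gA gam) DA DA DA) 1 (star_rhs (fA gam) (gA gam) bA)
              tgtA_dom (1 / 2) tgtA_rhs /\
  (* Case (C) *)
  point_equiv (star_dom (fC gam) (gC gam) (DfC gam) (DgC gam) DbC) 1
              (star_rhs (fC gam) (gC gam) bC)
              tgtC_dom (1 / 4) tgtC_rhs /\
  (* Case (D) *)
  point_equiv (star_dom fD gD DfD DgD DbD) 1 (star_rhs fD gD bD)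
              tgtD_dom 1 tgtD_rhs /\
  (* Case (F) *)
  point_equiv (star_dom fF gF DfF DgF DbF) 1 (star_rhs fF gF bF)
              tgtF_dom 1 tgtF_rhs /\
  (* Case (H) at parameter 0 *)
  point_equiv (star_dom fH gH DfH DgH DbH) 1 (star_rhs fH gH bH)
              tgtH_dom 1 tgtH_rhs /\
  (* Case (I) *)
  point_equiv (star_dom (fI gam) (gI gam) (DfI gam) (DgI gam) DbI) 1
              (star_rhs (fI gam) (gI gam) bI)
              (tgtI_dom gam) (- (1 / (1 + gam ^ 2))) (tgtI_rhs gam).
Proof.
  intros gam Hg.
  exact (conj (caseA gam Hg) (conj (caseC gam Hg)
          (conj caseD (conj caseF (conj caseH (caseI gam Hg)))))).
Qed.
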